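(* Let $k \ge 1$ and $0 \le j \le k$. The number of binary words (of any length, including the empty word) that avoid $0^i1^{k-i}$ for all $i \in \{0,1,\dots,k\}$ and contain exactly $j$ zeros equals the ballot number $T(k, j+1) = \frac{k-j}{k+1}\binom{k+j+1}{k}$.
   Context: A binary word avoids a word $u$ if $u$ does not occur in it as a (not necessarily contiguous) subsequence. $0^i$ denotes $i$ consecutive zeros and $1^i$ denotes $i$ consecutive ones. The ballot numbers are $T(n,k) = \frac{n-k+1}{n+1}\binom{n+k}{n}$. *)

(* Binary words are seq bool with false = 0, true = 1. *)
From mathcomp Require Import all_boot all_order all_algebra.
Set Implicit Arguments. Unset Strict Implicit. Unset Printing Implicit Defensive.
Import Order.TTheory GRing.Theory Num.Theory.

Definition avoids (w u : seq bool) : bool := ~~ subseq u w.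

Definition zo_word (k i : nat) : seq bool := nseq i false ++ nseq (k - i) true.

Definition avoids_all (k : nat) (w : seq bool) : bool :=
  all (fun i => avoids w (zo_word k i)) (iota 0 k.+1).

Definition nzeros (w : seq bool) : nat := count_mem false w.

Definition ballot (n m : nat) : rat :=
  ((n%:Z - m%:Z + 1)%:~R / (n.+1)%:R * ('C(n + m, n))%:R)%R.

(* Appending a 1 to w can only complete
   patterns 0^i 1^(k+1-i) with i <= k, so w1 avoids all patterns of level k+1
   iff w avoids all patterns of level k; appending a 0 can only complete
   0^(k+1), so w0 avoids level k+1 iff w does and has fewer than k zeros.
   Splitting by the last letter, the number a(k,j) of words of level k with
   j zeros satisfies a(k+1,j+1) = a(k,j+1) + a(k+1,j) for j < k, which is the
   recurrence of C(k+j+1,k) - C(k+j+1,k+1) = T(k,j+1). *)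

From mathcomp Require Import all_boot all_order all_algebra zify.
Import GRing.Theory Num.Theory.

Section RconsSubseq.
Variable T : eqType.
Implicit Types (s w : seq T) (x y : T).

Lemma subseq_rcons2 s w x y :
  subseq (rcons s x) (rcons w y) =
    if x == y then subseq s w else subseq (rcons s x) w.
Proof.
rewrite -[LHS]subseq_rev !rev_rcons /=.
case: ifP => _; first by rewrite subseq_rev.
by rewrite -[in RHS]subseq_rev rev_rcons.
Qed.

Lemma subseq_nseq n x w : subseq (nseq n x) w = (n <= count_mem x w).
Proof.
elim: w n => [|y w IHw] [|n] //=.
by rewrite eq_sym; case: (y == x); rewrite /= ?IHw ?(IHw n.+1).
Qed.

Lemma nseqS_rcons n x : nseq n.+1 x = rcons (nseq n x) x.
Proof. by rewrite -cats1 -addn1 nseqD. Qed.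

Lemma mem_map_rcons (ss : seq (seq T)) s x y :
  (rcons s x \in map (rcons^~ y) ss) = (x == y) && (s \in ss).
Proof.
case: eqP => [<-|/eqP neq_xy]; first exact/mem_map/rcons_injl.
by apply/mapP => -[t _ /eqP]; rewrite eqseq_rcons (negbTE neq_xy) andbF.
Qed.

Lemma nil_notin_map_rcons (ss : seq (seq T)) y : [::] \notin map (rcons^~ y) ss.
Proof. by apply/mapP => -[[|? ?] _]. Qed.

End RconsSubseq.

Lemma nzeros_rcons w b : nzeros (rcons w b) = nzeros w + ~~ b.
Proof. by rewrite /nzeros -cats1 count_cat /=; case: b. Qed.

Lemma zo_wordS k i : i <= k -> zo_word k.+1 i = rcons (zo_word k i) true.
Proof. by move=> le_ik; rewrite /zo_word subSn // nseqS_rcons rcons_cat. Qed.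

Lemma zo_word_diag k : zo_word k k = nseq k false.
Proof. by rewrite /zo_word subnn cats0. Qed.

Lemma avoids_nseq_false w n : avoids w (nseq n false) = (nzeros w < n).
Proof. by rewrite /avoids subseq_nseq ltnNge. Qed.

Lemma avoids_allS k w :
  avoids_all k.+1 w =
    all (fun i => avoids w (zo_word k.+1 i)) (iota 0 k.+1) && (nzeros w < k.+1).
Proof.
rewrite /avoids_all -[k.+2]addn1 iotaD all_cat /=.
by rewrite zo_word_diag avoids_nseq_false andbT.
Qed.

Lemma avoids_all_nzeros k w : avoids_all k w -> nzeros w < k.
Proof.
case: k => [|k]; last by rewrite avoids_allS => /andP[].
by rewrite /avoids_all /= /avoids sub0seq.
Qed.

Lemma avoids_all0 w : avoids_all 0 w = false.
Proof. by apply/negP => /avoids_all_nzeros. Qed.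

Lemma avoids_all_nil k : avoids_all k.+1 [::].
Proof. by apply/allP => -[|i] _; rewrite /avoids /zo_word //= subn0. Qed.

Lemma avoids_all_rcons_true k w : avoids_all k.+1 (rcons w true) = avoids_all k w.
Proof.
rewrite avoids_allS nzeros_rcons addn0.
have -> : all (fun i => avoids (rcons w true) (zo_word k.+1 i)) (iota 0 k.+1)
          = avoids_all k w.
  apply: eq_in_all => i; rewrite mem_iota ltnS => /= le_ik.
  by rewrite zo_wordS // /avoids subseq_rcons2.
by case: (boolP (avoids_all k w)) => // /avoids_all_nzeros /ltnW; rewrite -ltnS => ->.
Qed.

Lemma avoids_all_rcons_false k w :
  avoids_all k.+1 (rcons w false) = avoids_all k.+1 w && (nzeros w < k).
Proof.
rewrite !avoids_allS nzeros_rcons addn1 ltnS.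
have -> : all (fun i => avoids (rcons w false) (zo_word k.+1 i)) (iota 0 k.+1)
          = all (fun i => avoids w (zo_word k.+1 i)) (iota 0 k.+1).
  apply: eq_in_all => i; rewrite mem_iota ltnS => /= le_ik.
  by rewrite zo_wordS // /avoids !subseq_rcons2.
by rewrite -andbA; congr (_ && _); apply/idP/idP => [lt_nk|/andP[]//]; lia.
Qed.

Fixpoint avoiders (k : nat) : nat -> seq (seq bool) :=
  if k is k'.+1 then
    fix avoiders_k j :=
      if j is j'.+1 then
        map (rcons^~ true) (avoiders k' j) ++
        (if j' < k' then map (rcons^~ false) (avoiders_k j') else [::])
      else [::] :: map (rcons^~ true) (avoiders k' 0)
  else fun=> [::].

Lemma avoidersS0 k : avoiders k.+1 0 = [::] :: map (rcons^~ true) (avoiders k 0).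
Proof. by []. Qed.

Lemma avoidersSS k j :
  avoiders k.+1 j.+1 =
    map (rcons^~ true) (avoiders k j.+1) ++
    (if j < k then map (rcons^~ false) (avoiders k.+1 j) else [::]).
Proof. by []. Qed.

Lemma nil_in_avoiders k j : ([::] \in avoiders k j) = (0 < k) && (j == 0).
Proof.
case: k => [|k] //; case: j => [|j]; first by rewrite avoidersS0 in_cons eqxx.
rewrite avoidersSS mem_cat (negbTE (nil_notin_map_rcons _ _ _)).
by case: ifP => _; rewrite ?(negbTE (nil_notin_map_rcons _ _ _)).
Qed.

Lemma rcons_in_avoidersS k j u b :
  (rcons u b \in avoiders k.+1 j) =
    if b then u \in avoiders k j
    else if j is j'.+1 then (j' < k) && (u \in avoiders k.+1 j') else false.
Proof.
case: j => [|j].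
  by rewrite avoidersS0 in_cons mem_map_rcons; case: b; case: u.
rewrite avoidersSS mem_cat mem_map_rcons.
by case: ifP => _; rewrite ?mem_map_rcons; case: b; rewrite ?in_nil ?orbF.
Qed.

Lemma mem_avoiders k j w : (w \in avoiders k j) = avoids_all k w && (nzeros w == j).
Proof.
elim: k j w => [|k IHk] j w; first by rewrite avoids_all0.
elim: j w => [|j IHj]; case/lastP => [|u b];
  rewrite ?nil_in_avoiders ?avoids_all_nil // rcons_in_avoidersS nzeros_rcons.
- case: b; first by rewrite IHk avoids_all_rcons_true addn0.
  by rewrite addn1 andbF.
- case: b; first by rewrite IHk avoids_all_rcons_true addn0.
  rewrite IHj avoids_all_rcons_false addn1 eqSS.
  by case: (nzeros u =P j) => [->|]; rewrite ?andbF // !andbT andbC.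
Qed.

Lemma uniq_avoiders k j : uniq (avoiders k j).
Proof.
elim: k j => [|k IHk] // j; elim: j => [|j IHj].
  by rewrite avoidersS0 /= nil_notin_map_rcons (map_inj_uniq (@rcons_injl _ true)) IHk.
rewrite avoidersSS cat_uniq (map_inj_uniq (@rcons_injl _ true)) IHk /=.
case: ifP => // _; rewrite (map_inj_uniq (@rcons_injl _ false)) IHj andbT.
by apply/hasPn => _ /mapP[v _ ->]; rewrite mem_map_rcons.
Qed.

Lemma avoiders_small k j : k <= j -> avoiders k j = [::].
Proof.
move=> le_kj; case: (avoiders k j) (mem_avoiders k j) => // w s /(_ w).
by rewrite mem_head => /esym/andP[/avoids_all_nzeros + /eqP]; lia.
Qed.

Lemma size_avoiders k j :
  j <= k -> size (avoiders k j) + 'C(k + j + 1, k.+1) = 'C(k + j + 1, k).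
Proof.
elim: k j => [|k IHk] j; first by case: j.
elim: j => [_|j IHj le_jk].
  rewrite avoidersS0 /= size_map; move: (IHk 0 isT).
  by rewrite !addn0 !addn1 !binn !binSn; lia.
rewrite avoidersSS size_cat size_map.
have -> : k.+1 + j.+1 + 1 = (k + j + 2).+1 by lia.
rewrite !binS; case: ltnP => [lt_jk | le_kj].
  move: (IHk j.+1 lt_jk) (IHj (ltnW le_jk)); rewrite size_map.
  have -> : k + j.+1 + 1 = k + j + 2 by lia.
  have -> : k.+1 + j + 1 = k + j + 2 by lia.
  lia.
have eq_jk : j = k by lia.
rewrite eq_jk avoiders_small // -[in RHS](@bin_sub _ k); last by lia.
have -> : k + k + 2 - k = k.+2 by lia.
rewrite /=; lia.
Qed.

Section Ballot.
Local Open Scope ring_scope.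

Lemma ballot_add_bin (n m : nat) :
  ballot n m + ('C(n + m, n.+1))%:R = ('C(n + m, n))%:R.
Proof.
have n1_neq0 : (n.+1%:R : rat) != 0 by rewrite pnatr_eq0.
have -> : ('C(n + m, n.+1))%:R = m%:R / n.+1%:R * ('C(n + m, n))%:R :> rat.
  apply: (mulfI n1_neq0); rewrite mulrA mulrCA mulfV // mulr1 -!natrM.
  by rewrite mul_bin_left addKn.
rewrite /ballot -mulrDl -mulrDl.
have -> : (n%:Z - m%:Z + 1)%:~R + m%:R = n.+1%:R :> rat.
  rewrite -[m%:R]/(m%:Z%:~R) -[n.+1%:R]/(n.+1%:Z%:~R) -intrD; congr (_%:~R); lia.
by rewrite mulfV // mul1r.
Qed.

End Ballot.

Theorem corollary3p6 (k j : nat) (hk : 1 <= k) (hj : j <= k) :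
  exists s : seq (seq bool),
    [/\ uniq s,
        (forall w : seq bool, (w \in s) = avoids_all k w && (nzeros w == j))
      & ((size s)%:R = ballot k j.+1)%R].
Proof.
exists (avoiders k j); split; [exact: uniq_avoiders | exact: mem_avoiders |].
apply: (addIr ('C(k + j.+1, k.+1))%:R%R).
by rewrite ballot_add_bin -natrD addnS -addn1 size_avoiders.
Qed.
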